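(* Let $\hat\phi_{\mathrm{CS}}(\cdot)=\mathbb{1}(s(\cdot)>t_{\mathrm{CS}})$ be a given classifier, where the scoring function $s:\mathcal{X}\to\mathbb{R}$ and threshold $t_{\mathrm{CS}}$ are regarded as fixed. Let $F$ be the cumulative distribution function of $s(X^0)$, where $X^0\sim X\mid(Y=0)$. Apply $s$ to a left-out class-0 sample of size $m$ (independent of $s$ and $t_{\mathrm{CS}}$), giving scores $T_1,\dots,T_m$, with $k$-th order statistic $T_{(k)}$. If $T_{(1)}\le t_{\mathrm{CS}}$, let $k_s^*=\max\{k\in\{1,\dots,m\}:T_{(k)}\le t_{\mathrm{CS}}\}$ and define the surrogate classifier $\hat\phi_{k_s^*}(\cdot)=\mathbb{1}(s(\cdot)>T_{(k_s^* )})$. Then $R_0(\hat\phi_{k_s^*})\ge R_0(\hat\phi_{\mathrm{CS}})$, and for $\alpha\in(0,1)$, $$\mathbb{P}_m\big(R_0(\hat\phi_{k_s^*})>\alpha\big)\begin{cases}=1 & \text{if } t_{\mathrm{CS}}<F^{-1}(1-\alpha),\\ \le (2-\alpha-F(t_{\mathrm{CS}}))^m-(1-F(t_{\mathrm{CS}}))^m & \text{if } t_{\mathrm{CS}}\ge F^{-1}(1-\alpha),\end{cases}$$ where $\mathbb{P}_m$ is the probability with respect to the randomness of the left-out class-0 sample of size $m$.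
   Context: $(X,Y)$ is a random pair with $X\in\mathcal{X}\subset\mathbb{R}^d$ and $Y\in\{0,1\}$. For a classifier $\phi:\mathcal{X}\to\{0,1\}$, $R_0(\phi)=\mathbb{P}(\phi(X)=1\mid Y=0)$ is the population type I error (for a classifier depending on the left-out sample, this probability is over an independent new $X$ given $Y=0$, with the sample held fixed). The left-out scores $T_1,\dots,T_m$ are i.i.d. with distribution function $F$.
   Formalization: $\mathbb{P}_m(R_0(\hat\phi_{k_s^*})>\alpha)$ is the probability of the joint event $T_{(1)}\le t_{\mathrm{CS}}$ and $R_0(\hat\phi_{k_s^*})>\alpha$, which in the case $t_{\mathrm{CS}}<F^{-1}(1-\alpha)$ equals the probability that $T_{(1)}\le t_{\mathrm{CS}}$ instead of 1. The statement above fails without it. *)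

From HB Require Import structures.
From mathcomp Require Import all_boot all_order all_algebra.
From mathcomp Require Import all_classical all_reals all_analysis.
Set Implicit Arguments. Unset Strict Implicit. Unset Printing Implicit Defensive.
Import Order.TTheory GRing.Theory Num.Theory.
Local Open Scope classical_set_scope.
Local Open Scope ring_scope.

Section Defs.
Context {R : realType}.

Definition condprob {d} {T : measurableType d} (P : probability T R)
  (A B : set T) : R := fine (P (A `&` B)) / fine (P B).

(* Law of X given Y = 0 (class 0 is encoded as [false]). *)
Definition class0_law {d dx} {T : measurableType d} {Xs : measurableType dx}
  (P : probability T R) (X : T -> Xs) (Y : T -> bool) (A : set Xs) : R :=
  condprob P (X @^-1` A) (Y @^-1` [set false]).

Definition R0 {d dx} {T : measurableType d} {Xs : measurableType dx}
  (P : probability T R) (X : T -> Xs) (Y : T -> bool) (phi : Xs -> bool) : R :=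
  class0_law P X Y [set x | phi x].

Definition cdf0 {d dx} {T : measurableType d} {Xs : measurableType dx}
  (P : probability T R) (X : T -> Xs) (Y : T -> bool) (s : Xs -> R) (x : R) : R :=
  class0_law P X Y [set z | s z <= x].

Definition quantile (F : R -> R) (p : R) : R := inf [set x | p <= F x].

Definition thr_classifier {dx} {Xs : measurableType dx} (s : Xs -> R) (c : R)
  : Xs -> bool := fun x => c < s x.

(* k-th order statistic (1-indexed) of the values v_0, ..., v_{m-1}. *)
Definition order_stat (m : nat) (v : 'I_m -> R) (k : nat) : R :=
  nth 0 (sort (fun a b : R => a <= b) [seq v i | i <- enum 'I_m]) k.-1.

(* k_s^* = max { k in {1..m} | T_(k) <= t }  (0 if the set is empty). *)
Definition kstar (m : nat) (v : 'I_m -> R) (t : R) : nat :=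
  \big[maxn/0%N]_(k < m | (order_stat v k.+1 <= t)%R) k.+1.

Definition mutually_independent {d dx} {T : measurableType d}
  {Xs : measurableType dx} (Q : probability T R) (m : nat) (Z : 'I_m -> T -> Xs) :=
  forall B : 'I_m -> set Xs, (forall i, measurable (B i)) ->
    fine (Q (\bigcap_(i in [set: 'I_m]) (Z i @^-1` B i))) =
    \prod_(i < m) fine (Q (Z i @^-1` B i)).

End Defs.

From HB Require Import structures.
From mathcomp Require Import all_boot all_order all_algebra.
From mathcomp Require Import all_classical all_reals all_analysis.
From mathcomp Require Import lra measurable_realfun.
Import Order.TTheory GRing.Theory Num.Theory.
Local Open Scope classical_set_scope.
Local Open Scope ring_scope.

(* Let F be the distribution function of the class-0 score, so that the
   threshold classifier at c has type I error 1 - F c, and note that the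
   surrogate threshold is the largest sample score not exceeding tCS.
   Monotonicity of F compares the surrogate with the fixed threshold, and below
   the (1 - alpha)-quantile F tCS < 1 - alpha already forces every surrogate
   error above alpha.  In general the surrogate error exceeds alpha exactly when
   every score exceeds tCS or has F-value below 1 - alpha, but not every score
   exceeds tCS; by independence this has probability p^m - (1 - F tCS)^m, where
   p <= 1 - F tCS + (1 - alpha) by the inequality P(F(T) < beta) <= beta. *)

Lemma itvNyo_bigcup {R : realType} (q : R) :
  `]-oo, q[%classic = \bigcup_n `]-oo, q - n.+1%:R^-1]%classic.
Proof.
apply/seteqP; split=> [r|r [n _]]; rewrite /= in_itv /=; last first.
  by move=> /le_lt_trans; apply; rewrite ltrBlDr ltrDl invr_gt0 ltr0n.
move=> /ltr_add_invr[n rn]; exists n => //=; rewrite in_itv /= lerBrDr ltW //.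
Qed.

Section cdf_lemmas.
Context {d} {T : measurableType d} {R : realType} {P : probability T R}.
Variable X : {RV P >-> R}.

Lemma exists_cdf_lt (beta : R) : 0 < beta -> exists r, (cdf X r < beta%:E)%E.
Proof.
move=> beta_gt0; have /fine_cvgP[_ cdfNy0] := cvg_cdfNy0 X.
have [r /= ltr] := filter_ex (cvgr_lt _ cdfNy0 _ beta_gt0).
by exists r; rewrite -[cdf X r]fineK ?fin_num_measure // lte_fin.
Qed.

Lemma cdf_ub_ge1 (beta : \bar R) : (forall r, cdf X r <= beta)%E -> (1 <= beta)%E.
Proof.
by move=> le_beta; apply: (cvge_to_le (cvg_cdfy1 X)); near=> r; exact: le_beta.
Unshelve. all: by end_near. Qed.

Local Open Scope ereal_scope.

Lemma distribution_itvNyo_le (q : R) (beta : \bar R) :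
  (forall r, (r < q)%R -> cdf X r <= beta) ->
  distribution P X `]-oo, q[ <= beta.
Proof.
move=> le_beta; rewrite itvNyo_bigcup.
apply: (cvge_to_le (nondecreasing_cvg_mu _ _ _)) => //.
- by apply: bigcup_measurable => n _; exact: measurable_itv.
- move=> n k nk; apply/subsetPset; apply: subset_itvl; rewrite bnd_simp.
  by rewrite lerD2l lerN2 lef_pV2 ?posrE ?ler_nat.
- by near=> n; apply: le_beta; rewrite ltrBlDr ltrDl invr_gt0 ltr0n.
Unshelve. all: by end_near. Qed.

(* [cdf X < beta] is a down-set: empty, all of R, or ]-oo, q] or ]-oo, q[ for
   q its supremum. *)
Lemma distribution_cdf_lt (beta : R) : (0 <= beta)%R ->
  distribution P X [set r | cdf X r < beta%:E] <= beta%:E.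
Proof.
move=> beta_ge0; set U := [set r | _].
have U_down r r' : (r' <= r)%R -> U r -> U r'.
  by move=> r'r; apply: le_lt_trans; exact: cdf_nondecreasing.
have [->|/set0P[r0 Ur0]] := eqVneq U set0; first by rewrite measure0 lee_fin.
have [ubU|/has_ubPn U_unbounded] := pselect (has_ubound U); last first.
  have UT r : U r.
    by have [r' Ur' rr'] := U_unbounded r; exact: U_down (ltW rr') Ur'.
  rewrite (_ : U = setT); last by apply/seteqP; split=> // r _; exact: UT.
  apply: le_trans (probability_le1 (distribution P X) measurableT) _.
  by apply: cdf_ub_ge1 => r; exact/ltW/UT.
have below_sup r : (r < sup U)%R -> U r.
  by move=> /(sup_gt (ex_intro _ r0 Ur0))[r' Ur' rr']; exact: U_down (ltW rr') Ur'.
have [Uq|Uq] := pselect (U (sup U)).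
  have -> : U = `]-oo, sup U]%classic.
    apply/seteqP; split=> r; rewrite /= in_itv /=; first exact: ub_le_sup.
    by move=> rq; exact: U_down rq Uq.
  exact: ltW.
have -> : U = `]-oo, sup U[%classic.
  apply/seteqP; split=> r; rewrite /= in_itv /=; last exact: below_sup.
  by move=> Ur; rewrite lt_neqAle ub_le_sup // andbT; apply: contraPneq Uq => <-.
by apply: distribution_itvNyo_le => r /below_sup /ltW.
Qed.

End cdf_lemmas.

Lemma measurable_preimage {d d'} {T : measurableType d} {U : measurableType d'}
  {f : T -> U} {A : set U} :
  measurable_fun setT f -> measurable A -> measurable (f @^-1` A).
Proof. by move=> mf mA; rewrite -(setTI (f @^-1` A)); exact: mf. Qed.

Lemma class0_law_ge0 {R : realType} {d0 dx} {Omega0 : measurableType d0}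
    {Xs : measurableType dx} (P : probability Omega0 R) (X : Omega0 -> Xs)
    (Y : Omega0 -> bool) (A : set Xs) :
  0 <= class0_law P X Y A.
Proof. by rewrite divr_ge0 // fine_ge0. Qed.

Section class0_population.
Context {R : realType} {d0} {Omega0 : measurableType d0} (P : probability Omega0 R)
  {dx} {Xs : measurableType dx} {X : Omega0 -> Xs} {Y : Omega0 -> bool}
  (mX : measurable_fun setT X) (mY0 : measurable (Y @^-1` [set false]))
  (PY0 : (0 < P (Y @^-1` [set false]))%E)
  {s : Xs -> R} (ms : measurable_fun setT s).

Definition class0_prob := mnormalize (mrestr P mY0) P.

Lemma class0_probE A : class0_prob A =
  (P (A `&` Y @^-1` [set false]) * (fine (P (Y @^-1` [set false])))^-1%:E)%E.
Proof.
rewrite /class0_prob /mnormalize /= /mrestr setTI.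
by rewrite (gt_eqF PY0) /= lt_eqF // (le_lt_trans (probability_le1 P mY0)) ?ltry.
Qed.

Lemma class0_lawE A : measurable A ->
  class0_law P X Y A = fine (class0_prob (X @^-1` A)).
Proof.
move=> mA; rewrite class0_probE fineM ?fin_num_measure //.
exact: measurableI (measurable_preimage mX mA) mY0.
Qed.

Definition score := s \o X.

Lemma measurable_score : measurable_fun setT score.
Proof. exact: measurableT_comp. Qed.

HB.instance Definition _ := isMeasurableFun.Build _ _ _ _ score measurable_score.

Local Notation F := (cdf0 P X Y s).
Local Notation S := (score : {RV class0_prob >-> R}).

Lemma cdf0E x : F x = fine (cdf S x).
Proof.
rewrite /cdf0 (_ : [set z | s z <= x] = s @^-1` `]-oo, x]); last first.
  by apply/seteqP; split=> z; rewrite /= in_itv.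
by rewrite class0_lawE //; exact: measurable_preimage.
Qed.

Lemma ccdf_score x : ccdf S x = (1 - F x)%:E.
Proof.
have := cdf_ccdf_1 S x.
rewrite -[cdf S x]fineK ?fin_num_measure // -[ccdf S x]fineK ?fin_num_measure //.
by rewrite -EFinD => -[<-]; rewrite cdf0E addrC addKr.
Qed.

Let gtE x : [set z | x < s z] = s @^-1` `]x, +oo[.
Proof. by apply/seteqP; split=> z; rewrite /= in_itv /= andbT. Qed.

Lemma measurable_gt x : measurable [set z | x < s z].
Proof. by rewrite gtE; exact: measurable_preimage. Qed.

Lemma R0_thr_classifier x : R0 P X Y (thr_classifier s x) = 1 - F x.
Proof.
rewrite /R0 /thr_classifier class0_lawE; last exact: measurable_gt.
by rewrite gtE -[LHS]/(fine (ccdf S x)) ccdf_score.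
Qed.

Lemma cdf0_nondecreasing : {homo F : x y / x <= y}.
Proof.
by move=> x y xy; rewrite !cdf0E fine_le ?fin_num_measure //; exact: cdf_nondecreasing.
Qed.

Lemma exists_cdf0_lt beta : 0 < beta -> exists x, F x < beta.
Proof.
move=> /(exists_cdf_lt S)[x ltx].
by exists x; rewrite cdf0E -lte_fin fineK ?fin_num_measure.
Qed.

Lemma measurable_cdf0_lt beta : measurable [set r | F r < beta].
Proof.
rewrite (_ : [set r | F r < beta] = F @^-1` `]-oo, beta[); last first.
  by apply/seteqP; split=> r; rewrite /= in_itv.
apply: measurable_preimage (measurable_itv _).
exact: nondecreasing_measurable cdf0_nondecreasing.
Qed.

Let gt_or_cdf0_ltE t beta : [set z | t < s z \/ F (s z) < beta] =
  s @^-1` (`]t, +oo[ `|` [set r | F r < beta]).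
Proof. by apply/seteqP; split=> z; rewrite /= in_itv /= andbT. Qed.

Lemma measurable_gt_or_cdf0_lt t beta :
  measurable [set z | t < s z \/ F (s z) < beta].
Proof.
rewrite gt_or_cdf0_ltE; apply: measurable_preimage => //.
exact: measurableU (measurable_itv _) (measurable_cdf0_lt beta).
Qed.

Lemma class0_law_gt_or_cdf0_lt t beta : 0 <= beta ->
  class0_law P X Y [set z | t < s z \/ F (s z) < beta] <= 1 - F t + beta.
Proof.
move=> beta_ge0; have mU := measurable_gt_or_cdf0_lt t beta.
rewrite class0_lawE // -lee_fin fineK; last first.
  exact: fin_num_measure (measurable_preimage mX mU).
rewrite gt_or_cdf0_ltE.
apply: le_trans (measureU2 (distribution class0_prob S) (measurable_itv _)
  (measurable_cdf0_lt beta)) _.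
rewrite EFinD; apply: leeD; first by rewrite -[leLHS]/(ccdf S t) ccdf_score.
rewrite (_ : [set r | F r < beta] = [set r | (cdf S r < beta%:E)%E]).
  exact: distribution_cdf_lt.
by apply/seteqP; split=> r; rewrite /= cdf0E -lte_fin fineK ?fin_num_measure.
Qed.

End class0_population.

Section order_statistics.
Context {R : realType} {m : nat} (v : 'I_m -> R).

Let sv := sort (fun a b : R => a <= b) [seq v i | i <- enum 'I_m].

Let size_sv : size sv = m.
Proof. by rewrite size_sort size_map size_enum_ord. Qed.

Let sorted_sv : sorted (fun a b : R => a <= b) sv.
Proof. by apply: sort_sorted => a b; exact: le_total. Qed.

Let nth_sv_mono j k : (j <= k < m)%N -> nth 0 sv j <= nth 0 sv k.
Proof.
move=> /andP[jk km]; apply: (sorted_leq_nth le_trans lexx 0 sorted_sv) => //.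
  by rewrite inE size_sv (leq_ltn_trans jk km).
by rewrite inE size_sv.
Qed.

Let nth_sv_range j : (j < m)%N -> exists i, nth 0 sv j = v i.
Proof.
move=> jm; have : nth 0 sv j \in sv by rewrite mem_nth // size_sv.
by rewrite mem_sort => /mapP[i _ ->]; exists i.
Qed.

Let sv_nth i : exists2 j, (j < m)%N & v i = nth 0 sv j.
Proof.
have : v i \in sv by rewrite mem_sort; apply: map_f; rewrite mem_enum.
by move=> /(nthP 0)[j]; rewrite size_sv => jm <-; exists j.
Qed.

Lemma order_stat1_le t : (0 < m)%N -> order_stat v 1 <= t <-> exists i, v i <= t.
Proof.
move=> m_gt0; split=> [|[i vi_le]].
  by have [i vi] := nth_sv_range 0 m_gt0; rewrite /order_stat -/sv vi; exists i.
have [j jm vij] := sv_nth i; apply: le_trans vi_le.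
by rewrite vij; exact: nth_sv_mono.
Qed.

Lemma order_stat_kstar t : (exists i, v i <= t) ->
  [/\ order_stat v (kstar v t) <= t,
      exists i, order_stat v (kstar v t) = v i &
      forall i, v i <= t -> v i <= order_stat v (kstar v t)].
Proof.
move=> [i0 vi0_le]; pose below := [pred k : 'I_m | nth 0 sv k <= t].
have [j0 j0m vi0] := sv_nth i0.
have : (0 < #|below|)%N by apply/card_gt0P; exists (Ordinal j0m); rewrite inE /= -vi0.
move=> /(eq_bigmax_cond (fun k : 'I_m => k.+1))[k below_k kE].
rewrite /kstar [X in order_stat _ X]kE /order_stat /=.
split; [exact: below_k | exact: nth_sv_range | move=> i vi_le].
have [j jm vij] := sv_nth i.
have below_j : below (Ordinal jm) by rewrite inE /= -vij.
have := @leq_bigmax_cond _ below (fun k : 'I_m => k.+1) _ below_j.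
by rewrite kE ltnS vij => jk; apply: nth_sv_mono; rewrite jk /=.
Qed.

Lemma order_stat_kstar_ltP (G : R -> R) t beta : {homo G : x y / x <= y} ->
  (exists i, v i <= t) /\ G (order_stat v (kstar v t)) < beta <->
  (forall i, t < v i \/ G (v i) < beta) /\ exists i, v i <= t.
Proof.
move=> G_nd; split=> [[below_t ltG]|[all_i below_t]]; split=> //.
  move=> i; have [vi_le|] := leP (v i) t; [right|by left].
  have [_ _ le_max] := order_stat_kstar _ below_t.
  exact: le_lt_trans (G_nd _ _ (le_max i vi_le)) ltG.
have [le_t [i ci] _] := order_stat_kstar _ below_t.
rewrite ci in le_t *; have [lt_t|//] := all_i i.
by have := lt_le_trans lt_t le_t; rewrite ltxx.
Qed.

End order_statistics.

Lemma lt_quantile {R : realType} (G : R -> R) (beta t : R) :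
  {homo G : x y / x <= y} -> (exists x, G x < beta) ->
  t < quantile G beta -> G t < beta.
Proof.
move=> G_nd [x0 Gx0_lt] lt_t; rewrite ltNge; apply/negP => Gt_ge.
have lbS : has_lbound [set x | beta <= G x].
  exists x0 => y Gy_ge; rewrite leNgt; apply/negP => yx0.
  by have := le_lt_trans (G_nd _ _ (ltW yx0)) Gx0_lt; rewrite ltNge Gy_ge.
by have := ge_inf lbS Gt_ge; rewrite leNgt lt_t.
Qed.

Lemma mutually_independent_bigcapE {R : realType} {d dx} {T : measurableType d}
    {Xs : measurableType dx} {Q : probability T R} {m : nat}
    {Z : 'I_m -> T -> Xs} (A : set Xs) (p : R) :
  mutually_independent Q Z -> measurable A ->
  (forall i, fine (Q (Z i @^-1` A)) = p) ->
  fine (Q (\bigcap_(i in [set: 'I_m]) Z i @^-1` A)) = p ^+ m.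
Proof.
move=> indep mA lawA; rewrite (indep (fun=> A)) //.
by rewrite (eq_bigr (fun=> p)) ?prodr_const ?card_ord // => i _; exact: lawA.
Qed.

Section proposition4.
Context {R : realType} {d0} {Omega0 : measurableType d0} {P : probability Omega0 R}
  {dx} {Xs : measurableType dx} {X : Omega0 -> Xs} {Y : Omega0 -> bool}
  (mX : measurable_fun setT X) (mY0 : measurable (Y @^-1` [set false]))
  (PY0 : (0 < P (Y @^-1` [set false]))%E)
  {s : Xs -> R} (ms : measurable_fun setT s) (tCS : R)
  {m : nat} (m_gt0 : (0 < m)%N) {d} {Omega : measurableType d} {Q : probability Omega R}
  {X0 : 'I_m -> Omega -> Xs} (mX0 : forall i, measurable_fun setT (X0 i))
  (law0 : forall i (A : set Xs), measurable A ->
            fine (Q (X0 i @^-1` A)) = class0_law P X Y A)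
  (indep : mutually_independent Q X0).

Local Notation F := (cdf0 P X Y s).
Local Notation T w := (fun i => s (X0 i w)).
Local Notation surrogate w := (order_stat (T w) (kstar (T w) tCS)).
Let R0_thr := R0_thr_classifier P mX mY0 PY0 ms.
Let F_nd := cdf0_nondecreasing P mX mY0 PY0 ms.

Lemma R0_CS_le_surrogate w : order_stat (T w) 1 <= tCS ->
  R0 P X Y (thr_classifier s tCS) <= R0 P X Y (thr_classifier s (surrogate w)).
Proof.
move=> /(order_stat1_le _ _ m_gt0) below_t; rewrite !R0_thr lerD2l lerN2.
by have [le_t _ _] := order_stat_kstar _ _ below_t; exact: F_nd.
Qed.

Lemma surrogate_gt_below_quantile (alpha : R) : alpha < 1 ->
  tCS < quantile F (1 - alpha) ->
  Q [set w | order_stat (T w) 1 <= tCS /\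
             alpha < R0 P X Y (thr_classifier s (surrogate w))] =
  Q [set w | order_stat (T w) 1 <= tCS].
Proof.
move=> alpha_lt1 lt_q.
have F_lt : F tCS < 1 - alpha.
  apply: lt_quantile F_nd _ lt_q.
  by apply: (exists_cdf0_lt P mX mY0 PY0 ms); rewrite subr_gt0.
congr (Q _); apply/seteqP; split=> [w []//|w below_t]; split=> //.
rewrite R0_thr ltrBrDr -ltrBrDl.
have [le_t _ _] := order_stat_kstar _ _ (proj1 (order_stat1_le _ _ m_gt0) below_t).
exact: le_lt_trans (F_nd _ _ le_t) F_lt.
Qed.

Local Notation sample_in A := (\bigcap_(i in [set: 'I_m]) X0 i @^-1` A).

Lemma surrogate_gt_event (alpha : R) :
  [set w | order_stat (T w) 1 <= tCS /\
           alpha < R0 P X Y (thr_classifier s (surrogate w))] =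
  sample_in [set z | tCS < s z \/ F (s z) < 1 - alpha] `\`
  sample_in [set z | tCS < s z].
Proof.
have F_ltP (v : 'I_m -> R) := order_stat_kstar_ltP v F tCS (1 - alpha) F_nd.
apply/seteqP; split=> w.
  move=> [/(order_stat1_le _ _ m_gt0) below_t]; rewrite R0_thr ltrBrDr -ltrBrDl.
  move=> F_lt; have [all_i _] := (F_ltP _).1 (conj below_t F_lt).
  split=> [i _|all_gt]; first exact: all_i.
  by have [i /(lt_le_trans (all_gt i I))] := below_t; rewrite ltxx.
move=> [all_i not_all_gt].
have below_t : exists i, T w i <= tCS.
  apply: contra_notP not_all_gt => none i _; rewrite /= ltNge.
  by apply/negP => ?; apply: none; exists i.
have [_ F_lt] := (F_ltP _).2 (conj (fun i => all_i i I) below_t).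
split; first exact/(order_stat1_le _ _ m_gt0).
by rewrite R0_thr ltrBrDr -ltrBrDl.
Qed.

Lemma surrogate_gt_prob_le (alpha : R) : alpha <= 1 ->
  (Q [set w | (order_stat (T w) 1 <= tCS /\
              alpha < R0 P X Y (thr_classifier s (surrogate w)))%R] <=
   ((2 - alpha - F tCS) ^+ m - (1 - F tCS) ^+ m)%:E)%E.
Proof.
move=> alpha_le1; have beta_ge0 : 0 <= 1 - alpha by rewrite subr_ge0.
rewrite surrogate_gt_event.
set B := [set z | _ \/ _]; set G := [set z | _ < _].
have mB : measurable B := measurable_gt_or_cdf0_lt P mX mY0 PY0 ms tCS (1 - alpha).
have mG : measurable G := measurable_gt ms tCS.
have m_sample A : measurable A -> measurable (sample_in A).
  by move=> mA; apply: fin_bigcap_measurable => // i _; exact: measurable_preimage.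
have [mallB mallG] := (m_sample B mB, m_sample G mG).
rewrite measureD //; last by rewrite (le_lt_trans (probability_le1 Q mallB)) ?ltry.
rewrite setIidr; last by move=> w all_gt i _; left; exact: all_gt.
rewrite -[X in (X - _)%E]fineK ?fin_num_measure //.
rewrite -[X in (_ - X)%E]fineK ?fin_num_measure // -EFinB lee_fin.
rewrite (mutually_independent_bigcapE _ _ indep mB (fun i => law0 i B mB)).
rewrite (mutually_independent_bigcapE _ (1 - F tCS) indep mG); last first.
  by move=> i; rewrite law0 // -R0_thr.
have pB_le : class0_law P X Y B <= 2 - alpha - F tCS.
  by have := class0_law_gt_or_cdf0_lt P mX mY0 PY0 ms tCS _ beta_ge0; lra.
rewrite lerD2r lerXn2r ?nnegrE ?class0_law_ge0 //.
exact: le_trans (class0_law_ge0 _ _ _ _) pB_le.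
Qed.

End proposition4.

Theorem proposition4 (R : realType)
  (* population: (X, Y) on a probability space, X in the feature space Xs *)
  (d0 : measure_display) (Omega0 : measurableType d0) (P : probability Omega0 R)
  (dx : measure_display) (Xs : measurableType dx)
  (X : Omega0 -> Xs) (Y : Omega0 -> bool)
  (mX : measurable_fun setT X) (mY0 : measurable (Y @^-1` [set false]))
  (PY0 : (0 < P (Y @^-1` [set false]))%E)
  (* fixed scoring function and threshold *)
  (s : Xs -> R) (ms : measurable_fun setT s) (tCS : R)
  (* left-out class-0 sample of size m, on its own probability space *)
  (m : nat) (m_gt0 : (0 < m)%N)
  (d : measure_display) (Omega : measurableType d) (Q : probability Omega R)
  (X0 : 'I_m -> Omega -> Xs)
  (mX0 : forall i, measurable_fun setT (X0 i))
  (law0 : forall i (A : set Xs), measurable A ->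
            fine (Q (X0 i @^-1` A)) = class0_law P X Y A)
  (indep : mutually_independent Q X0) :
  let F := cdf0 P X Y s in
  let T := fun (w : Omega) (i : 'I_m) => s (X0 i w) in
  let defined := fun w => order_stat (T w) 1 <= tCS in
  let R0surr := fun w =>
      R0 P X Y (thr_classifier s (order_stat (T w) (kstar (T w) tCS))) in
  let R0CS := R0 P X Y (thr_classifier s tCS) in
  (forall w, defined w -> R0CS <= R0surr w) /\
  (forall alpha : R, 0 < alpha < 1 ->
     (tCS < quantile F (1 - alpha) ->
        Q [set w | defined w /\ alpha < R0surr w] = Q [set w | defined w]) /\
     (quantile F (1 - alpha) <= tCS ->
        (Q [set w | defined w /\ (alpha < R0surr w)%R] <=
         ((2 - alpha - F tCS) ^+ m - (1 - F tCS) ^+ m)%:E)%E)).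
Proof.
move=> F T defined R0surr R0CS.
split=> [w|alpha /andP[_ alpha_lt1]].
  exact: R0_CS_le_surrogate.
split=> [lt_q|_].
  exact: surrogate_gt_below_quantile.
(* The tail bound holds whatever the position of [tCS] relative to the quantile. *)
exact/surrogate_gt_prob_le/ltW.
Qed.
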